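(* Let $F$ be a vector lattice endowed with a locally solid additive convergence $\eta$, and let $(f_{\alpha})_{\alpha\in A}$ be a net in $F_{+}$. Then $H=\{h\in F:\ |h|\wedge f_{\alpha}\xrightarrow{\eta} 0_{F}\}$ is an ideal of $F$. If $\eta$ is idempotent, then $H$ is closed (i.e., the limit of every $\eta$-convergent net in $H$ lies in $H$).
   Context: A convergence structure on a vector lattice $F$ is locally solid additive if addition and $f\mapsto -f$ are continuous and whenever $|e_\alpha|\le|f_\alpha|$ for all $\alpha$ and $f_\alpha\to 0_F$, then $e_\alpha\to0_F$. A locally solid additive convergence $\eta$ is idempotent if for any nets $(f_{\alpha})_{\alpha\in A},(g_{\beta})_{\beta\in B}\subset F_{+}$ such that $g_{\beta}\xrightarrow[\beta]{\eta} 0_{F}$ and $(f_{\alpha}-g_{\beta})^{+}\xrightarrow[\alpha]{\eta} 0_{F}$ for every $\beta$, it follows that $f_{\alpha}\xrightarrow[\alpha]{\eta} 0_{F}$. *)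

From HB Require Import structures.
From mathcomp Require Import all_boot all_order all_algebra.
From mathcomp Require Import reals.
Set Implicit Arguments. Unset Strict Implicit. Unset Printing Implicit Defensive.
Import Order.TTheory GRing.Theory Num.Theory.
Local Open Scope ring_scope.

Record dirset := DirSet {
  dcar :> Type;
  dle : dcar -> dcar -> Prop;
  dle_refl : forall a, dle a a;
  dle_trans : forall a b c, dle a b -> dle b c -> dle a c;
  dle_dir : forall a b, exists c, dle a c /\ dle b c;
  dnonempty : inhabited dcar }.

Definition convergence (X : Type) := forall A : dirset, (A -> X) -> X -> Prop.

Definition quasi_subnet (X : Type) (A B : dirset) (y : B -> X) (x : A -> X) :=
  forall a0 : A, exists b0 : B, forall b, dle b0 b ->
    exists a, dle a0 a /\ y b = x a.

(* Net convergence structure (O'Brien--Troitsky--van der Walt). *)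
Definition is_convergence_structure (X : Type) (eta : convergence X) :=
  [/\ (forall (A : dirset) (x : X), eta A (fun _ => x) x),
      (forall (A B : dirset) (x : A -> X) (y : B -> X) (l : X),
          eta A x l -> quasi_subnet y x -> eta B y l) &
      (forall (A : dirset) (x y z : A -> X) (l : X),
          eta A x l -> eta A y l -> (forall a, z a = x a \/ z a = y a) ->
          eta A z l)].

Record vlattice (R : realType) (F : lmodType R) := VLattice {
  vle : F -> F -> Prop;
  vjoin : F -> F -> F;
  vle_refl : forall x, vle x x;
  vle_anti : forall x y, vle x y -> vle y x -> x = y;
  vle_trans : forall x y z, vle x y -> vle y z -> vle x z;
  vle_add : forall x y z, vle x y -> vle (x + z) (y + z);
  vle_scale : forall (a : R) x y, 0 <= a -> vle x y -> vle (a *: x) (a *: y);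
  vjoin_ubl : forall x y, vle x (vjoin x y);
  vjoin_ubr : forall x y, vle y (vjoin x y);
  vjoin_least : forall x y z, vle x z -> vle y z -> vle (vjoin x y) z }.

Section VL.
Variables (R : realType) (F : lmodType R) (V : vlattice F).
Definition vmeet (x y : F) : F := - vjoin V (- x) (- y).
Definition vabs (x : F) : F := vjoin V x (- x).
Definition vpos (x : F) : F := vjoin V x 0.

Definition is_ideal (S : F -> Prop) :=
  [/\ S 0,
      (forall x y, S x -> S y -> S (x + y)),
      (forall (a : R) x, S x -> S (a *: x)) &
      (forall x y, S y -> vle V (vabs x) (vabs y) -> S x)].

Definition locally_solid_additive (eta : convergence F) :=
  [/\ (forall (A : dirset) (x y : A -> F) (l m : F),
          eta A x l -> eta A y m -> eta A (fun a => x a + y a) (l + m)),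
      (forall (A : dirset) (x : A -> F) (l : F),
          eta A x l -> eta A (fun a => - x a) (- l)) &
      (forall (A : dirset) (e f : A -> F),
          (forall a, vle V (vabs (e a)) (vabs (f a))) ->
          eta A f 0 -> eta A e 0)].

Definition idempotent_conv (eta : convergence F) :=
  forall (A B : dirset) (f : A -> F) (g : B -> F),
    (forall a, vle V 0 (f a)) -> (forall b, vle V 0 (g b)) ->
    eta B g 0 ->
    (forall b, eta A (fun a => vpos (f a - g b)) 0) ->
    eta A f 0.

Definition closed_set (eta : convergence F) (S : F -> Prop) :=
  forall (B : dirset) (h : B -> F) (x : F),
    (forall b, S (h b)) -> eta B h x -> S x.
End VL.

(* The map h |-> (|h| /\ f_a)_a is monotone in |h| and subadditive, by the
   Riesz-type inequality (u + v) /\ f <= u /\ f + v /\ f for u, v, f >= 0;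
   solidity of the convergence then makes H an ideal.  For closedness, if
   h_b --> x with h_b in H, the nets g_b := |h_b - x| and (|x| /\ f_a)_a satisfy
   (|x| /\ f_a - g_b)^+ <= |h_b| /\ f_a, which tends to 0 in a for each b, so
   idempotency gives |x| /\ f_a --> 0. *)
From Pilot Require Import Defs.
From HB Require Import structures.
From mathcomp Require Import all_boot all_order all_algebra.
From mathcomp Require Import reals.
Import Order.TTheory GRing.Theory Num.Theory.
Local Open Scope ring_scope.
Set Implicit Arguments. Unset Strict Implicit.

Section VectorLattice.
Variables (R : realType) (F : lmodType R) (V : vlattice F).
Local Notation le := (vle V).
Local Notation vmeet := (vmeet V).
Local Notation vabs := (vabs V).
Local Notation vpos := (vpos V).

Lemma vleD x y u v : le x y -> le u v -> le (x + u) (y + v).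
Proof.
move=> le_xy le_uv; apply: (vle_trans (vle_add u le_xy)).
by rewrite ![y + _]addrC; apply: vle_add.
Qed.

Lemma vle_addl u x y : le 0 u -> le x y -> le x (u + y).
Proof. by move=> u_ge0 le_xy; have := vleD u_ge0 le_xy; rewrite add0r. Qed.

Lemma vleBlDr x y z : le (x - y) z <-> le x (z + y).
Proof.
split=> h; first by have := vle_add y h; rewrite subrK.
by have := vle_add (- y) h; rewrite addrK.
Qed.

Lemma vle_subr_ge0 x y : le 0 (y - x) -> le x y.
Proof. by move=> h; have := vle_add x h; rewrite add0r subrK. Qed.

Lemma vleN2 x y : le x y -> le (- y) (- x).
Proof.
move=> le_xy; have := vle_add (- x - y) le_xy.
by rewrite addrA subrr add0r addrC addrNK.
Qed.

Lemma vleNr x y : le x (- y) -> le y (- x).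
Proof. by move=> /vleN2; rewrite opprK. Qed.

Lemma vleNl x y : le (- x) y -> le (- y) x.
Proof. by move=> /vleN2; rewrite opprK. Qed.

Lemma vmulrn_ge0 x n : le 0 x -> le 0 (x *+ n).
Proof.
move=> x_ge0; elim: n => [|n IHn]; first exact: vle_refl.
by rewrite mulrS; apply: vle_addl.
Qed.

Lemma vmeet_lbl x y : le (vmeet x y) x.
Proof. exact/vleNl/vjoin_ubl. Qed.

Lemma vmeet_lbr x y : le (vmeet x y) y.
Proof. exact/vleNl/vjoin_ubr. Qed.

Lemma vmeet_greatest x y z : le z x -> le z y -> le z (vmeet x y).
Proof. by move=> le_zx le_zy; apply/vleNr/vjoin_least; apply: vleN2. Qed.

Lemma vmeet_le2l x y z : le x y -> le (vmeet x z) (vmeet y z).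
Proof.
move=> le_xy; apply: vmeet_greatest; last exact: vmeet_lbr.
exact: vle_trans (vmeet_lbl _ _) le_xy.
Qed.

(* Prove (u + v) /\ f - v /\ f <= u /\ f against both arguments of each meet. *)
Lemma vmeetDl_le u v f : le 0 u -> le 0 v -> le 0 f ->
  le (vmeet (u + v) f) (vmeet u f + vmeet v f).
Proof.
move=> u_ge0 v_ge0 f_ge0; set z := vmeet (u + v) f.
apply/vleBlDr; apply: vmeet_greatest.
- apply/vleBlDr; rewrite addrC; apply/vleBlDr; apply: vmeet_greatest.
  + by apply/vleBlDr; rewrite addrC; apply: vmeet_lbl.
  + by apply/vleBlDr; rewrite addrC; apply: vle_addl u_ge0 (vmeet_lbr _ _).
- apply/vleBlDr; rewrite addrC; apply/vleBlDr; apply: vmeet_greatest.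
  + by apply/vleBlDr; apply: vle_addl v_ge0 (vmeet_lbr _ _).
  + by apply/vleBlDr; apply: vle_addl f_ge0 (vmeet_lbr _ _).
Qed.

Lemma vabs_ubl x : le x (vabs x). Proof. exact: vjoin_ubl. Qed.

Lemma vabs_ubr x : le (- x) (vabs x). Proof. exact: vjoin_ubr. Qed.

(* 0 = x - x <= 2 |x|, then halve. *)
Lemma vabs_ge0 x : le 0 (vabs x).
Proof.
have := vleD (vabs_ubl x) (vabs_ubr x); rewrite subrr.
have half_ge0 : (0 : R) <= 2%:R^-1 by rewrite invr_ge0 ler0n.
move=> /(vle_scale half_ge0).
by rewrite scaler0 -mulr2n -scaler_nat scalerA mulVf ?scale1r ?pnatr_eq0.
Qed.

Lemma vabs_id x : le 0 x -> vabs x = x.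
Proof.
move=> x_ge0; apply: vle_anti; last exact: vabs_ubl.
apply: vjoin_least; first exact: vle_refl.
by have := vleN2 x_ge0; rewrite oppr0 => /vle_trans; apply.
Qed.

Lemma vmeet_abs_ge0 x y : le 0 y -> le 0 (vmeet (vabs x) y).
Proof. exact: vmeet_greatest (vabs_ge0 _). Qed.

Lemma vabsN x : vabs (- x) = vabs x.
Proof.
rewrite /Defs.vabs opprK.
by apply: vle_anti; apply: vjoin_least;
  first [exact: vjoin_ubl | exact: vjoin_ubr].
Qed.

Lemma vabsD_le x y : le (vabs (x + y)) (vabs x + vabs y).
Proof.
apply: vjoin_least; first by apply: vleD; apply: vabs_ubl.
by rewrite opprD; apply: vleD; apply: vabs_ubr.
Qed.

Lemma vabs_le_sub x y : le (vabs x) (vabs y + vabs (y - x)).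
Proof.
by rewrite -[vabs (y - x)]vabsN -[in vabs x](subKr y x); apply: vabsD_le.
Qed.

Lemma vabsZ_le (a : R) x : le (vabs (a *: x)) (`|a| *: vabs x).
Proof.
have [a_ge0|a_lt0] := leP 0 a.
  rewrite ger0_norm //; apply: vjoin_least; first exact: vle_scale (vabs_ubl x).
  by rewrite -scalerN; apply: vle_scale (vabs_ubr x).
rewrite ltr0_norm //; have Na_ge0 : 0 <= - a by rewrite oppr_ge0 ltW.
apply: vjoin_least; last by rewrite -scaleNr; apply: vle_scale (vabs_ubl x).
by rewrite -[a *: x]opprK -scaleNr -scalerN; apply: vle_scale (vabs_ubr x).
Qed.

Lemma vabsZ_le_mulrn (a : R) x n :
  `|a| <= n%:R -> le (vabs (a *: x)) (vabs x *+ n).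
Proof.
move=> le_an; apply: vle_trans (vabsZ_le a x) _; apply: vle_subr_ge0.
rewrite -scaler_nat -scalerBl -(scaler0 _ (n%:R - `|a|)).
by apply: vle_scale (vabs_ge0 _); rewrite subr_ge0.
Qed.

Lemma vpos_ge0 x : le 0 (vpos x). Proof. exact: vjoin_ubr. Qed.

Lemma vpos_vmeet_absB_le x y f : le 0 f ->
  le (vpos (vmeet (vabs x) f - vabs (y - x))) (vmeet (vabs y) f).
Proof.
move=> f_ge0; apply: vjoin_least; last exact: vmeet_abs_ge0.
apply/vleBlDr; apply: vle_trans (vmeet_le2l f (vabs_le_sub x y)) _.
apply: vle_trans (vmeetDl_le (vabs_ge0 _) (vabs_ge0 _) f_ge0) _.
exact: vleD (vle_refl V _) (vmeet_lbl _ _).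
Qed.

End VectorLattice.

Section MeetNull.
Variables (R : realType) (F : lmodType R) (V : vlattice F).
Variable eta : convergence F.
Arguments eta : clear implicits.
Hypothesis eta_cst : forall (A : dirset) (x : F), eta A (fun _ => x) x.
Hypothesis eta_add : forall (A : dirset) (x y : A -> F) (l m : F),
  eta A x l -> eta A y m -> eta A (fun a => x a + y a) (l + m).
Hypothesis eta_solid : forall (A : dirset) (e g : A -> F),
  (forall a, vle V (vabs V (e a)) (vabs V (g a))) -> eta A g 0 -> eta A e 0.

Lemma eta_squeeze0 (A : dirset) (e g : A -> F) :
  (forall a, vle V 0 (e a)) -> (forall a, vle V (e a) (g a)) ->
  eta A g 0 -> eta A e 0.
Proof.
move=> e_ge0 le_eg; apply: eta_solid => a.
by rewrite !vabs_id //; apply: vle_trans (le_eg a).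
Qed.

Lemma eta_subr0 (A : dirset) (h : A -> F) (x : F) :
  eta A h x -> eta A (fun a => h a - x) 0.
Proof. by move=> /eta_add /(_ (@eta_cst A (- x))); rewrite subrr. Qed.

Variables (A : dirset) (f : A -> F).
Hypothesis f_ge0 : forall a, vle V 0 (f a).

Definition meet_null (h : F) := eta A (fun a => vmeet V (vabs V h) (f a)) 0.

Lemma meet_null_solid x y :
  meet_null y -> vle V (vabs V x) (vabs V y) -> meet_null x.
Proof.
move=> null_y le_xy; apply: eta_squeeze0 null_y => a.
  exact: vmeet_abs_ge0 (f_ge0 a).
exact: vmeet_le2l.
Qed.

Lemma meet_null0 : meet_null 0.
Proof.
apply: (eta_squeeze0 (g := fun=> 0)) (eta_cst _ _) => a.
  exact: vmeet_abs_ge0 (f_ge0 a).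
by rewrite (vabs_id (vle_refl V 0)); apply: vmeet_lbl.
Qed.

Lemma meet_nullD x y : meet_null x -> meet_null y -> meet_null (x + y).
Proof.
move=> null_x null_y; have := eta_add null_x null_y; rewrite addr0.
apply: eta_squeeze0 => a; first exact: vmeet_abs_ge0 (f_ge0 a).
apply: vle_trans (vmeet_le2l _ (vabsD_le _ _ _)) _.
exact: vmeetDl_le (vabs_ge0 _ _) (vabs_ge0 _ _) (f_ge0 a).
Qed.

Lemma meet_null_abs x : meet_null x -> meet_null (vabs V x).
Proof.
move=> null_x; apply: meet_null_solid null_x _.
by rewrite (vabs_id (vabs_ge0 V x)); apply: vle_refl.
Qed.

Lemma meet_nullMn x n : meet_null x -> meet_null (x *+ n).
Proof.
move=> null_x; elim: n => [|n IHn]; first by rewrite mulr0n; apply: meet_null0.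
by rewrite mulrS; apply: meet_nullD.
Qed.

Lemma meet_nullZ (a : R) x : meet_null x -> meet_null (a *: x).
Proof.
move=> /meet_null_abs /(meet_nullMn (Num.bound `|a|)) /meet_null_solid; apply.
rewrite (vabs_id (vmulrn_ge0 _ (vabs_ge0 V x))).
by apply: vabsZ_le_mulrn; rewrite ltW // archi_boundP.
Qed.

Lemma meet_null_ideal : is_ideal V meet_null.
Proof.
split; [exact: meet_null0 | exact: meet_nullD | exact: meet_nullZ | ].
by move=> x y; apply: meet_null_solid.
Qed.

Lemma meet_null_closed : idempotent_conv V eta -> closed_set eta meet_null.
Proof.
move=> eta_idem B h x null_h h_to_x.
apply: (eta_idem A B _ (fun b => vabs V (h b - x))).
- by move=> a; apply/vmeet_abs_ge0/f_ge0.
- by move=> b; apply: vabs_ge0.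
- apply: eta_solid (eta_subr0 h_to_x) => b.
  by rewrite (vabs_id (vabs_ge0 V _)); apply: vle_refl.
move=> b; apply: eta_squeeze0 (null_h b) => a; first exact: vpos_ge0.
exact: vpos_vmeet_absB_le.
Qed.

End MeetNull.

Theorem proposition2p4 (R : realType) (F : lmodType R) (V : vlattice F)
  (eta : convergence F)
  (Heta : is_convergence_structure eta)
  (Hls : locally_solid_additive V eta)
  (A : dirset) (f : A -> F) (Hf : forall a, vle V 0 (f a)) :
  let H := fun h : F => eta A (fun a => vmeet V (vabs V h) (f a)) 0 in
  is_ideal V H /\ (idempotent_conv V eta -> closed_set eta H).
Proof.
case: Heta => eta_cst _ _; case: Hls => eta_add _ eta_solid.
split; first exact: (meet_null_ideal eta_cst eta_add eta_solid Hf).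
exact: (meet_null_closed eta_cst eta_add eta_solid Hf).
Qed.
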